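(* Let $\Lambda'$, $\Lambda\subset\Lambda'$ and $Z$ be as in the context. Then for every $\Lambda$-module $U$, the $\Lambda$-action on $U$ extends to an action of $\Lambda'$, i.e. $U$ can (non-uniquely) be given the structure of a $\Lambda'$-module restricting to the given $\Lambda$-module structure.
   Context: Let $\mathbb{F}$ be a field of characteristic $p$, sufficiently large so that all simple modules considered are absolutely simple. $\Lambda'$ is an Artinian $\mathbb F$-algebra, $\Lambda\subset\Lambda'$ a subalgebra, and $Z$ a finite subgroup of the group of units of the center of $\Lambda'$, of order prime to $p$. Put $Y:=Z/(\Lambda\cap Z)$. It is assumed that $\Lambda'$ is a crossed product $\Lambda*Y$: there is a set $\widetilde Y=\{\widetilde y:y\in Y\}$ of units of $\Lambda'$ (the image of a set-theoretic section $Y\to Z$ sending $1$ to $1$) with $|\widetilde Y|=|Y|$, such that $\Lambda'$ is free as a left and as a right $\Lambda$-module with basis $\widetilde Y$, $\widetilde{1_Y}=1$, and for $y_1,y_2\in Y$, $\widetilde{y_1}\Lambda=\Lambda\widetilde{y_1}$ and $\widetilde{y_1}\widetilde{y_2}\Lambda=\widetilde{y_1y_2}\Lambda$. Modules are left modules. *)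

From HB Require Import structures.
From mathcomp Require Import all_boot all_order all_algebra all_fingroup.
Set Implicit Arguments. Unset Strict Implicit. Unset Printing Implicit Defensive.
Import GRing.Theory.
Local Open Scope ring_scope.

Section Defs.
Variables (F : fieldType) (A : algType F).

Definition is_subalg (L : {pred A}) : Prop :=
  1 \in L /\
  (forall (k : F) (x y : A), x \in L -> y \in L -> k *: x + y \in L) /\
  (forall x y : A, x \in L -> y \in L -> x * y \in L).

Definition left_ideal (I : A -> Prop) : Prop :=
  I 0 /\ (forall x y, I x -> I y -> I (x + y)) /\ (forall a x, I x -> I (a * x)).

Definition artinian : Prop :=
  forall I : nat -> A -> Prop,
    (forall n, left_ideal (I n)) ->
    (forall n x, I n.+1 x -> I n x) ->
    exists N, forall n, (N <= n)%N -> forall x, I n x <-> I N x.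

(* A (left) module over the subalgebra S of A: an F-vector space V with an
   action act, whose module axioms are imposed for elements of S only (the
   values of act outside S are irrelevant). *)
Definition module_over (S : {pred A}) (V : lmodType F) (act : A -> V -> V) : Prop :=
  (forall x, x \in S -> forall (k : F) (u v : V), act x (k *: u + v) = k *: act x u + act x v) /\
  (forall x y, x \in S -> y \in S -> forall (k : F) (u : V),
      act (k *: x + y) u = k *: act x u + act y u) /\
  (forall u : V, act 1 u = u) /\
  (forall x y, x \in S -> y \in S -> forall u : V, act (x * y) u = act x (act y u)).

Definition submodule_over (S : {pred A}) (V : lmodType F) (act : A -> V -> V)
  (W : V -> Prop) : Prop :=
  W 0 /\ (forall (k : F) u v, W u -> W v -> W (k *: u + v)) /\
  (forall x u, x \in S -> W u -> W (act x u)).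

Definition simple_over (S : {pred A}) (V : lmodType F) (act : A -> V -> V) : Prop :=
  module_over S act /\ (exists v : V, v != 0) /\
  forall W : V -> Prop, submodule_over S act W ->
    (forall v, W v) \/ (forall v, W v -> v = 0).

Definition abs_simple_over (S : {pred A}) (V : lmodType F) (act : A -> V -> V) : Prop :=
  simple_over S act /\
  forall f : V -> V,
    (forall (k : F) u v, f (k *: u + v) = k *: f u + f v) ->
    (forall x u, x \in S -> f (act x u) = act x (f u)) ->
    exists c : F, forall u, f u = c *: u.

End Defs.

From HB Require Import structures.
From mathcomp Require Import all_boot all_order all_algebra all_fingroup.
From mathcomp Require Import boolp.
Set Implicit Arguments. Unset Strict Implicit. Unset Printing Implicit Defensive.
Import GRing.Theory.
Local Open Scope ring_scope.

(* Write H = Z :&: Lambda.  For a linear character psi of Z, the element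
   e_psi = |H|^-1 sum_(v in H) psi(v^-1) v is a central idempotent of Lambda,
   and these idempotents are orthogonal for characters that differ on H.  By
   Schur's lemma and absolute simplicity, Z acts on every minimal left ideal of
   Lambda' through a linear character; so while 1 - sum e_psi is nonzero, a
   minimal left ideal of Lambda' (1 - sum e_psi) provides a character that is
   new on H, and the Artinian property stops this process with
   1 = sum_(psi in S) e_psi.  Then phi(z) = sum_(psi in S) psi(z) e_psi is a
   homomorphism from Z to the centre of Lambda extending the inclusion of H,
   so sum_y c_y y~ |-> sum_y c_y phi(y~) is an algebra retraction of Lambda'
   onto Lambda, through which every Lambda-module becomes a Lambda'-module. *)

Lemma is_subalg_closed (F : fieldType) (A : algType F) (L : {pred A}) :
  is_subalg L -> subalg_closed L.
Proof. by case=> L1 [LZD LM]; split. Qed.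

Lemma sum_mulr_fibers (R : pzSemiRingType) (I J : finType) (p : I -> J)
    (g : I -> R) (h : J -> R) :
  \sum_j (\sum_(i | p i == j) g i) * h j = \sum_i g i * h (p i).
Proof.
under eq_bigr do rewrite mulr_suml.
rewrite [RHS](partition_big p predT) //=; apply: eq_bigr => j _.
by apply: eq_bigr => i /eqP ->.
Qed.

Section LeftIdeals.
Variables (F : fieldType) (A : algType F).

Definition simple_modules_abs_simple : Prop :=
  forall (V : lmodType F) (act : A -> V -> V),
    simple_over predT act -> abs_simple_over predT act.

Definition left_principal (f : A) : A -> Prop := fun x => exists a, x = a * f.

Lemma left_principal_ideal f : left_ideal (left_principal f).
Proof.
split; first by exists 0; rewrite mul0r.
split; first by move=> _ _ [a ->] [b ->]; exists (a + b); rewrite mulrDl.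
by move=> a _ [b ->]; exists (a * b); rewrite mulrA.
Qed.

Definition minimal_left_ideal (K : A -> Prop) : Prop :=
  (exists k, K k /\ k <> 0) /\
  forall J, left_ideal J -> (forall x, J x -> K x) -> (exists x, J x /\ x <> 0) ->
    forall x, K x -> J x.

Lemma artinian_minimal (P : (A -> Prop) -> Prop) :
  artinian A -> (forall I, P I -> left_ideal I) -> (exists I, P I) ->
  exists2 I, P I & forall J, P J -> (forall x, J x -> I x) -> forall x, I x -> J x.
Proof.
move=> artA idealP [I0 PI0]; apply: contrapT => no_min.
have smaller (I : {I | P I}) :
    {J | P J /\ (forall x, J x -> sval I x) /\ exists x, sval I x /\ ~ J x}.
  apply: cid; apply: contrapT => no_smaller; apply: no_min.
  exists (sval I); first exact: svalP.
  move=> J PJ JI x Ix; apply: contrapT => nJx.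
  by apply: no_smaller; exists J; split=> //; split=> //; exists x.
pose next I : {I | P I} := exist _ _ (proj1 (svalP (smaller I))).
pose chain n := sval (iter n next (exist _ I0 PI0)).
have [N stable] := artA chain (fun n => idealP _ (svalP (iter n next _)))
  (fun n => proj1 (proj2 (svalP (smaller (iter n next _))))).
have [x [Ix nJx]] := proj2 (proj2 (svalP (smaller (iter N next (exist _ I0 PI0))))).
by apply: nJx; apply/(stable N.+1 (leqnSn N)).
Qed.

Section IdealModule.
Variables (K : A -> Prop) (idealK : left_ideal K).

Definition ideal_mem : {pred A} := fun x => `[< K x >].

Lemma ideal_mem_submod_closed : submod_closed ideal_mem.
Proof.
have [K0 [KD KM]] := idealK; split; first exact/asboolP.
move=> c u v /asboolP Ku /asboolP Kv; apply/asboolP; apply: KD => //.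
by rewrite -mulr_algl; apply: KM.
Qed.
HB.instance Definition _ :=
  GRing.isSubmodClosed.Build F A ideal_mem ideal_mem_submod_closed.

Record ideal_vect := IdealVect { ideal_val : A; _ : ideal_val \in ideal_mem }.
HB.instance Definition _ := [isSub for ideal_val].
HB.instance Definition _ := [Choice of ideal_vect by <:].
HB.instance Definition _ := [SubChoice_isSubLmodule of ideal_vect by <:].

Lemma ideal_valP (k : ideal_vect) : K (val k).
Proof. by case: k => x /= /asboolP. Qed.

Lemma ideal_mem_mull a (k : ideal_vect) : a * val k \in ideal_mem.
Proof. by apply/asboolP; have [_ [_ KM]] := idealK; apply/KM/ideal_valP. Qed.

Definition ideal_act a (k : ideal_vect) : ideal_vect := IdealVect (ideal_mem_mull a k).

Lemma ideal_act_module : module_over predT ideal_act.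
Proof.
split; first by move=> x _ c u v; apply: val_inj; rewrite /= mulrDr scalerAr.
split; first by move=> x y _ _ c u; apply: val_inj; rewrite /= mulrDl scalerAl.
by split=> [u|x y _ _ u]; apply: val_inj; rewrite /= ?mul1r ?mulrA.
Qed.

Hypothesis minK : minimal_left_ideal K.

Lemma minimal_ideal_simple : simple_over predT ideal_act.
Proof.
have [[k0 [Kk0 nz_k0]] Kmin] := minK.
split; first exact: ideal_act_module.
split.
  have Kk0' : k0 \in ideal_mem by exact/asboolP.
  by exists (IdealVect Kk0'); apply/eqP => /(congr1 val).
move=> W [W0 [WD WA]].
pose J x := exists2 k : ideal_vect, W k & x = val k.
have idealJ : left_ideal J.
  split; first by exists 0.
  split; last by move=> a _ [u Wu ->]; exists (ideal_act a u); first exact: WA.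
  by move=> _ _ [u Wu ->] [v Wv ->]; exists (1 *: u + v); [exact: WD | rewrite scale1r].
have JK x : J x -> K x by case=> u _ ->; exact: ideal_valP.
have [nzJ | zJ] := pselect (exists x, J x /\ x <> 0).
  by left=> v; have [u Wu /val_inj ->] := Kmin J idealJ JK nzJ _ (ideal_valP v).
right=> v Wv; apply: val_inj; apply: contrapT => nz_v; apply: zJ.
by exists (val v); split=> //; exists v.
Qed.

(* Schur's lemma for the absolutely simple module K. *)
Lemma minimal_ideal_central_scalar c :
  simple_modules_abs_simple -> (forall a, c * a = a * c) ->
  exists s : F, forall k, K k -> c * k = s *: k.
Proof.
move=> absA cC; have [_ scalar_end] := absA _ _ minimal_ideal_simple.
have [|x u _|s Hs] := scalar_end (ideal_act c).
- by move=> s u v; apply: val_inj; rewrite /= mulrDr scalerAr.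
- by apply: val_inj; rewrite /= !mulrA cC.
exists s => k Kk; have Kk' : k \in ideal_mem by exact/asboolP.
by have := congr1 val (Hs (IdealVect Kk')).
Qed.

End IdealModule.
End LeftIdeals.

Definition lin_char {F : fieldType} {gT : finGroupType} (psi : {ffun gT -> F}) : bool :=
  (psi 1%g == 1) && [forall x, [forall y, psi (x * y)%g == psi x * psi y]].

Lemma lin_charP (F : fieldType) (gT : finGroupType) (psi : {ffun gT -> F}) :
  reflect (psi 1%g = 1 /\ {morph psi : x y / (x * y)%g >-> x * y}) (lin_char psi).
Proof.
apply: (iffP andP) => [[/eqP psi1 /forallP psiM] | [psi1 psiM]].
  by split=> // x y; apply/eqP; move/forallP: (psiM x).
by rewrite psi1; split=> //; apply/forallP => x; apply/forallP => y; rewrite psiM.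
Qed.

Definition alg_retraction (F : fieldType) (A : algType F) (L : {pred A}) (theta : A -> A) :=
  [/\ forall a, theta a \in L, {in L, theta =1 id},
      forall k a b, theta (k *: a + b) = k *: theta a + theta b
    & {morph theta : a b / a * b}].

Lemma module_over_retraction (F : fieldType) (A : algType F) (L : {pred A})
    (V : lmodType F) (act : A -> V -> V) (theta : A -> A) :
  1 \in L -> alg_retraction L theta -> module_over L act ->
  module_over predT (fun a => act (theta a)).
Proof.
move=> L1 [thetaL theta_id theta_lin thetaM] [act_lin [actZD [act1 actM]]].
split; first by move=> x _; apply: act_lin.
split; first by move=> x y _ _ k u; rewrite theta_lin (actZD _ _ (thetaL x) (thetaL y)).
split; first by move=> u; rewrite theta_id.
by move=> x y _ _ u; rewrite thetaM (actM _ _ (thetaL x) (thetaL y)).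
Qed.

Section CentralSubgroup.
Variables (F : fieldType) (A : algType F) (L : {pred A}).
Variables (gT : finGroupType) (emb : gT -> A).
Hypotheses (subL : is_subalg L) (emb1 : emb 1%g = 1).
Hypotheses (embM : {morph emb : x y / (x * y)%g >-> x * y})
  (embC : forall z a, emb z * a = a * emb z).

HB.instance Definition _ :=
  GRing.isSubalgClosed.Build F A L (GRing.subalg_closed_semi (is_subalg_closed subL)).

Local Notation H := [set z : gT | emb z \in L].

Lemma emb_core_group_set : group_set H.
Proof.
apply/group_setP; split; first by rewrite inE emb1 rpred1.
by move=> x y; rewrite !inE embM; apply: rpredM.
Qed.
Let Hgroup : {group gT} := Group emb_core_group_set.

Section Characters.
Hypothesis card_neq0 : (#|gT|%:R : F) != 0.

Lemma card_core_neq0 : (#|H|%:R : F) != 0.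
Proof.
apply: contra card_neq0 => /eqP H0.
by have := Lagrange (subsetT Hgroup); rewrite cardsT => <-; rewrite natrM H0 mul0r.
Qed.

Implicit Types (psi : {ffun gT -> F}) (S : seq {ffun gT -> F}).

Definition char_idem psi : A := #|H|%:R^-1 *: \sum_(v in H) psi (v^-1)%g *: emb v.

Lemma char_idem_central psi a : char_idem psi * a = a * char_idem psi.
Proof.
rewrite -scalerAl -scalerAr mulr_suml mulr_sumr; congr (_ *: _).
by apply: eq_bigr => v _; rewrite -scalerAl -scalerAr embC.
Qed.

Lemma char_idem_in_L psi : char_idem psi \in L.
Proof. by rewrite rpredZ // rpred_sum // => v; rewrite inE => Lv; rewrite rpredZ. Qed.

Lemma emb_char_idem psi w :
  lin_char psi -> w \in H -> emb w * char_idem psi = psi w *: char_idem psi.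
Proof.
move=> /lin_charP[psi1 psiM] Hw; rewrite -scalerAr scalerA mulrC -scalerA mulr_sumr.
congr (_ *: _); rewrite [in RHS](reindex_inj (mulgI w)) /=.
rewrite [in RHS](eq_bigl [in H]) => [|v]; last by rewrite (groupMl _ (Hw : w \in Hgroup)).
rewrite scaler_sumr; apply: eq_bigr => v _.
by rewrite -scalerAr embM scalerA invMg psiM mulrCA -psiM mulgV psi1 mulr1.
Qed.

Lemma char_idem_fix psi x :
  lin_char psi -> (forall v, v \in H -> emb v * x = psi v *: x) -> char_idem psi * x = x.
Proof.
move=> /lin_charP[psi1 psiM] Hx; rewrite -scalerAl mulr_suml (eq_bigr (fun=> x)).
  by rewrite sumr_const -scaler_nat scalerA mulVf ?card_core_neq0 ?scale1r.
by move=> v Hv; rewrite -scalerAl Hx // scalerA -psiM mulVg psi1 scale1r.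
Qed.

Lemma char_idemK psi : lin_char psi -> char_idem psi * char_idem psi = char_idem psi.
Proof. by move=> psi_char; apply: char_idem_fix => // v; apply: emb_char_idem. Qed.

Definition chars_apart psi psi' : bool := [exists w in H, psi w != psi' w].

Lemma char_idem_orth psi psi' : lin_char psi -> lin_char psi' ->
  chars_apart psi psi' -> char_idem psi * char_idem psi' = 0.
Proof.
move=> psi_char psi'_char /existsP[w /andP[Hw psi_neq]].
have w_psi : emb w * (char_idem psi * char_idem psi') = psi w *: (char_idem psi * char_idem psi').
  by rewrite mulrA emb_char_idem // scalerAl.
have w_psi' :
    emb w * (char_idem psi * char_idem psi') = psi' w *: (char_idem psi * char_idem psi').
  by rewrite mulrA embC -mulrA emb_char_idem // scalerAr.
have /eqP : (psi w - psi' w) *: (char_idem psi * char_idem psi') = 0.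
  by rewrite scalerBl -w_psi -w_psi' subrr.
by rewrite scaler_eq0 subr_eq0 (negbTE psi_neq) => /eqP.
Qed.

Definition separated_chars S := all lin_char S && pairwise chars_apart S.

Definition char_sum S z : A := \sum_(psi <- S) psi z *: char_idem psi.

Lemma char_sum_central S z a : char_sum S z * a = a * char_sum S z.
Proof.
rewrite mulr_suml mulr_sumr; apply: eq_bigr => psi _.
by rewrite -scalerAl -scalerAr char_idem_central.
Qed.

Lemma char_sum_in_L S z : char_sum S z \in L.
Proof. by rewrite rpred_sum // => psi _; rewrite rpredZ ?char_idem_in_L. Qed.

Lemma char_sum_core S w : all lin_char S -> w \in H -> char_sum S w = emb w * char_sum S 1%g.
Proof.
move=> /allP S_char Hw; rewrite /char_sum mulr_sumr !big_seq; apply: eq_bigr => psi Spsi.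
have [psi1 _] := lin_charP _ (S_char _ Spsi).
by rewrite psi1 scale1r emb_char_idem ?S_char.
Qed.

Lemma char_idem_char_sum0 psi S z : lin_char psi -> all lin_char S ->
  all (chars_apart psi) S -> char_idem psi * char_sum S z = 0.
Proof.
move=> psi_char /allP S_char /allP apartS; rewrite /char_sum mulr_sumr big_seq big1 // => p Sp.
by rewrite -scalerAr (char_idem_orth psi_char (S_char _ Sp) (apartS _ Sp)) scaler0.
Qed.

Lemma char_idem_char_sum psi S z : separated_chars S -> psi \in S ->
  char_idem psi * char_sum S z = psi z *: char_idem psi.
Proof.
elim: S => // p S IHS /andP[/= /andP[p_char S_char] /andP[apart_p sepS]].
rewrite inE /char_sum big_cons mulrDr => /predU1P[-> | Spsi].
  by rewrite char_idem_char_sum0 // addr0 -scalerAr char_idemK.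
rewrite IHS //; last exact/andP.
have [p_apart_psi psi_char] := (allP apart_p _ Spsi, allP S_char _ Spsi).
by rewrite -scalerAr char_idem_central char_idem_orth ?scaler0 ?add0r.
Qed.

Lemma char_sumM S : separated_chars S ->
  {morph char_sum S : z z' / (z * z')%g >-> z * z'}.
Proof.
move=> sepS z z'; have /andP[/allP S_char _] := sepS.
rewrite /char_sum mulr_suml [in LHS]big_seq [in RHS]big_seq; apply: eq_bigr => psi Spsi.
have [_ psiM] := lin_charP _ (S_char _ Spsi).
by rewrite -scalerAl char_idem_char_sum // psiM -scalerA.
Qed.

Lemma char_idem_complement0 psi S : separated_chars S -> psi \in S ->
  char_idem psi * (1 - char_sum S 1%g) = 0.
Proof.
move=> sepS Spsi; have /andP[/allP S_char _] := sepS.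
have [psi1 _] := lin_charP _ (S_char _ Spsi).
by rewrite mulrBr mulr1 char_idem_char_sum // psi1 scale1r subrr.
Qed.

Lemma char_sum_complementK S : separated_chars S ->
  (1 - char_sum S 1%g) * (1 - char_sum S 1%g) = 1 - char_sum S 1%g.
Proof. by move=> sepS; rewrite mulrBl mul1r mulrBr mulr1 -char_sumM // mulg1 subrr subr0. Qed.

Lemma minimal_ideal_char K : simple_modules_abs_simple A ->
  left_ideal K -> minimal_left_ideal K ->
  exists2 psi, lin_char psi & forall z k, K k -> emb z * k = psi z *: k.
Proof.
move=> absA idealK minK.
have scalar z : {s : F | forall k, K k -> emb z * k = s *: k}.
  exact: cid (minimal_ideal_central_scalar idealK minK absA (embC z)).
pose psi := [ffun z => sval (scalar z)].
have psiP z k : K k -> emb z * k = psi z *: k by rewrite ffunE; apply: (svalP (scalar z)).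
exists psi => //; have [[k0 [Kk0 nz_k0]] _] := minK.
have psi_inj s t : s *: k0 = t *: k0 -> s = t.
  move/eqP; rewrite -subr_eq0 -scalerBl scaler_eq0 subr_eq0.
  by case/orP => /eqP // /nz_k0 [].
apply/lin_charP; split.
  by apply: psi_inj; rewrite -psiP // emb1 mul1r scale1r.
move=> x y; apply: psi_inj.
by rewrite -psiP // embM -mulrA (psiP y) // -scalerAr psiP // scalerA mulrC.
Qed.

Section Artinian.
Hypotheses (artA : artinian A) (absA : simple_modules_abs_simple A).

Lemma separated_chars_extend S : separated_chars S -> char_sum S 1%g != 1 ->
  exists2 psi, separated_chars (psi :: S) & char_idem psi * (1 - char_sum S 1%g) != 0.
Proof.
move=> sepS neq1; have /andP[S_char pwS] := sepS; set f := 1 - char_sum S 1%g.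
pose P J := [/\ left_ideal J, forall x, J x -> left_principal f x & exists x, J x /\ x <> 0].
have P_f : P (left_principal f).
  split; [exact: left_principal_ideal | by [] | exists f; split].
    by exists 1; rewrite mul1r.
  by move/eqP; rewrite subr_eq0 eq_sym (negbTE neq1).
have idealP J : P J -> left_ideal J by case.
have [K [idealK Kf nzK] minK] := artinian_minimal artA idealP (ex_intro _ _ P_f).
have minK' : minimal_left_ideal K.
  by split=> // J idealJ JK nzJ; apply: minK => //; split=> // x /JK /Kf.
have [psi psi_char psiP] := minimal_ideal_char absA idealK minK'.
have [k0 [Kk0 nz_k0]] := nzK.
have fC a : f * a = a * f by rewrite mulrBl mulrBr mul1r mulr1 char_sum_central.
have fk0 : f * k0 = k0.
  by have [a ->] := Kf _ Kk0; rewrite mulrA fC -mulrA char_sum_complementK.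
exists psi; last first.
  apply/eqP => ef0; apply: nz_k0.
  by rewrite -(char_idem_fix psi_char (fun v _ => psiP v k0 Kk0)) -fk0 mulrA ef0 mul0r.
rewrite /separated_chars /= psi_char S_char pwS /= andbT.
apply/allP => p Sp; apply: contraT => /existsPn agree.
have p_char : lin_char p by apply: (allP S_char).
have pk0 : char_idem p * k0 = k0.
  apply: char_idem_fix => // v Hv; rewrite psiP //.
  by move: (agree v); rewrite Hv negbK => /eqP ->.
by case: nz_k0; rewrite -pk0 -fk0 mulrA char_idem_complement0 ?mul0r.
Qed.

Lemma exists_complete_chars : exists2 S, separated_chars S & char_sum S 1%g = 1.
Proof.
pose P I := exists2 S, separated_chars S & I = left_principal (1 - char_sum S 1%g).
have idealP I : P I -> left_ideal I by case=> S _ ->; apply: left_principal_ideal.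
have P_nil : P (left_principal (1 - char_sum [::] 1%g)) by exists [::].
have [_ [S sepS ->] minI] := artinian_minimal artA idealP (ex_intro _ _ P_nil).
exists S => //; apply/eqP; apply: contraT => neq1.
have [psi sep' nz] := separated_chars_extend sepS neq1.
have /andP[/andP[psi_char S_char] /andP[apart_psi _]] := sep'.
have [psi1 _] := lin_charP _ psi_char.
set f := 1 - char_sum S 1%g; set f' := 1 - char_sum (psi :: S) 1%g.
have f'E : f' = f - char_idem psi.
  by rewrite /f' /char_sum big_cons psi1 scale1r opprD addrA addrAC.
have ef : char_idem psi * f = char_idem psi.
  by rewrite mulrBr mulr1 char_idem_char_sum0 ?subr0.
have f'f : f' * f = f'.
  by rewrite f'E mulrBl char_sum_complementK // ef.
have P_f' : P (left_principal f') by exists (psi :: S).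
have f'_sub x : left_principal f' x -> left_principal f x.
  by case=> a ->; exists (a * f'); rewrite -mulrA f'f.
have [a fa] := minI _ P_f' f'_sub f (ex_intro _ 1 (esym (mul1r f))).
move: nz; rewrite -/f fa mulrA char_idem_central -mulrA char_idem_complement0 ?mem_head //.
by rewrite mulr0 eqxx.
Qed.

End Artinian.
End Characters.

Section Retraction.
Variable sigma : coset_of H -> gT.
Hypotheses (emb_inj : injective emb) (sigmaK : forall y, coset H (sigma y) = y).
Hypothesis left_basis : forall a : A, exists c : coset_of H -> A,
  (forall y, c y \in L) /\ a = \sum_y c y * emb (sigma y).
Hypothesis left_basis_free : forall c c' : coset_of H -> A,
  (forall y, c y \in L) -> (forall y, c' y \in L) ->
  \sum_y c y * emb (sigma y) = \sum_y c' y * emb (sigma y) -> forall y, c y = c' y.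
Variable phi : gT -> A.
Hypotheses (phiL : forall z, phi z \in L) (phiM : {morph phi : x y / (x * y)%g >-> x * y}).
Hypotheses (phiC : forall z l, l \in L -> phi z * l = l * phi z) (phi_core : {in H, phi =1 emb}).

Lemma coset_section_core z : (z * (sigma (coset H z))^-1)%g \in H.
Proof.
have abelianT : abelian [set: gT].
  by apply/centsP => x _ y _; apply: emb_inj; rewrite !embM embC.
have normH x : x \in 'N(H)%g.
  exact: subsetP (sub_abelian_norm abelianT (subsetT Hgroup)) x (in_setT x).
rewrite -mem_rcoset; apply/(@rcoset_kercosetP _ Hgroup _ _ (normH _) (normH _)).
by rewrite sigmaK.
Qed.

Definition coord a : coset_of H -> A := sval (cid (left_basis a)).

Lemma coord_in_L a y : coord a y \in L.
Proof. exact: (proj1 (svalP (cid (left_basis a)))). Qed.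

Lemma coordE a : a = \sum_y coord a y * emb (sigma y).
Proof. exact: (proj2 (svalP (cid (left_basis a)))). Qed.

Lemma coord_unique a c : (forall y, c y \in L) ->
  a = \sum_y c y * emb (sigma y) -> forall y, coord a y = c y.
Proof.
move=> cL aE; apply: left_basis_free => //; first exact: coord_in_L.
by rewrite -aE -coordE.
Qed.

Definition retract a := \sum_y coord a y * phi (sigma y).

Lemma retract_sum (I : finType) (l : I -> A) (z : I -> gT) : (forall i, l i \in L) ->
  retract (\sum_i l i * emb (z i)) = \sum_i l i * phi (z i).
Proof.
move=> lL; pose w i := (z i * (sigma (coset H (z i)))^-1)%g.
have zE i : z i = (w i * sigma (coset H (z i)))%g by rewrite mulgKV.
have Hw i : w i \in H := coset_section_core (z i).
have Lw i : emb (w i) \in L by have := Hw i; rewrite inE.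
pose c y := \sum_(i | coset H (z i) == y) l i * emb (w i).
have cL y : c y \in L by rewrite rpred_sum // => i _; rewrite rpredM.
have coordS := coord_unique (a := \sum_i l i * emb (z i)) cL.
rewrite /retract (eq_bigr (fun y => c y * phi (sigma y))) => [|y _]; last first.
  rewrite coordS // sum_mulr_fibers; apply: eq_bigr => i _.
  by rewrite -mulrA -embM -zE.
rewrite sum_mulr_fibers; apply: eq_bigr => i _.
by rewrite -mulrA -(phi_core (Hw i)) -phiM -zE.
Qed.

Lemma retract_in_L a : retract a \in L.
Proof. by rewrite rpred_sum // => y _; rewrite rpredM ?coord_in_L. Qed.

Lemma retract_id : {in L, retract =1 id}.
Proof.
move=> x Lx; have := @retract_sum 'I_1 (fun=> x) (fun=> 1%g) (fun=> Lx).
by rewrite !big_ord1 emb1 mulr1 => ->; rewrite phi_core ?emb1 ?mulr1 // inE emb1 rpred1.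
Qed.

Lemma retract_linear k a b : retract (k *: a + b) = k *: retract a + retract b.
Proof.
have -> : k *: a + b = \sum_y (k *: coord a y + coord b y) * emb (sigma y).
  rewrite {1}(coordE a) {1}(coordE b) scaler_sumr -big_split.
  by apply: eq_bigr => y _; rewrite mulrDl scalerAl.
rewrite retract_sum => [|y]; last by rewrite rpredD ?rpredZ ?coord_in_L.
rewrite /retract scaler_sumr -big_split; apply: eq_bigr => y _.
by rewrite mulrDl scalerAl.
Qed.

Lemma retractM : {morph retract : a b / a * b}.
Proof.
move=> a b; have -> : a * b =
    \sum_(p : _ * _) (coord a p.1 * coord b p.2) * emb (sigma p.1 * sigma p.2)%g.
  rewrite {1}(coordE a) {1}(coordE b) mulr_suml; under eq_bigr do rewrite mulr_sumr.
  rewrite pair_big; apply: eq_bigr => -[y y'] _ /=.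
  by rewrite embM -!mulrA; congr (_ * _); rewrite !mulrA embC.
rewrite retract_sum => [|p]; last by rewrite rpredM ?coord_in_L.
rewrite /retract mulr_suml; under [RHS]eq_bigr do rewrite mulr_sumr.
rewrite pair_big; apply: eq_bigr => -[y y'] _ /=.
by rewrite phiM -!mulrA; congr (_ * _); rewrite !mulrA phiC ?coord_in_L.
Qed.

Lemma retract_alg_retraction : alg_retraction L retract.
Proof.
by split; [exact: retract_in_L | exact: retract_id | exact: retract_linear | exact: retractM].
Qed.

End Retraction.
End CentralSubgroup.

Theorem corollary5p3
  (F : fieldType) (A : algType F) (L : {pred A})
  (gT : finGroupType) (emb : gT -> A)
  (sigma : coset_of [set z : gT | emb z \in L] -> gT) :
  (* Lambda' = A is Artinian; Lambda = L is a subalgebra *)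
  artinian A -> is_subalg L ->
  (* all simple Lambda'- and Lambda-modules are absolutely simple *)
  (forall (V : lmodType F) (act : A -> V -> V),
      simple_over predT act -> abs_simple_over predT act) ->
  (forall (V : lmodType F) (act : A -> V -> V),
      simple_over L act -> abs_simple_over L act) ->
  (* Z = emb(gT): a finite subgroup of the units of the centre of A *)
  injective emb -> emb 1%g = 1 -> {morph emb : x y / (x * y)%g >-> x * y} ->
  (forall z a, emb z * a = a * emb z) ->
  (* |Z| prime to the characteristic of F *)
  (#|gT|%:R : F) != 0 ->
  (* sigma : Y = Z/(Lambda cap Z) -> Z is a section with sigma 1 = 1 *)
  (forall y, coset [set z : gT | emb z \in L] (sigma y) = y) ->
  sigma 1%g = 1%g ->
  (* A is free as a left Lambda-module with basis (emb (sigma y))_y *)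
  (forall a : A, exists c : coset_of [set z : gT | emb z \in L] -> A,
      (forall y, c y \in L) /\ a = \sum_y c y * emb (sigma y)) ->
  (forall c c' : coset_of [set z : gT | emb z \in L] -> A,
      (forall y, c y \in L) -> (forall y, c' y \in L) ->
      \sum_y c y * emb (sigma y) = \sum_y c' y * emb (sigma y) ->
      forall y, c y = c' y) ->
  (* ... and as a right Lambda-module *)
  (forall a : A, exists c : coset_of [set z : gT | emb z \in L] -> A,
      (forall y, c y \in L) /\ a = \sum_y emb (sigma y) * c y) ->
  (forall c c' : coset_of [set z : gT | emb z \in L] -> A,
      (forall y, c y \in L) -> (forall y, c' y \in L) ->
      \sum_y emb (sigma y) * c y = \sum_y emb (sigma y) * c' y ->
      forall y, c y = c' y) ->
  (* y~ Lambda = Lambda y~ *)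
  (forall y l, l \in L -> exists l', l' \in L /\ emb (sigma y) * l = l' * emb (sigma y)) ->
  (forall y l, l \in L -> exists l', l' \in L /\ l * emb (sigma y) = emb (sigma y) * l') ->
  (* y1~ y2~ Lambda = (y1 y2)~ Lambda *)
  (forall y1 y2 l, l \in L -> exists l', l' \in L /\
      emb (sigma y1) * emb (sigma y2) * l = emb (sigma (y1 * y2)%g) * l') ->
  (forall y1 y2 l, l \in L -> exists l', l' \in L /\
      emb (sigma (y1 * y2)%g) * l = emb (sigma y1) * emb (sigma y2) * l') ->
  (* conclusion: every Lambda-module extends to a Lambda'-module *)
  forall (V : lmodType F) (act : A -> V -> V),
    module_over L act ->
    exists act' : A -> V -> V,
      module_over predT act' /\ forall x, x \in L -> forall u, act' x u = act x u.
Proof.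
move=> artA subL absA _ emb_inj emb1 embM embC card_neq0 sigmaK _ left_basis left_basis_free.
move=> _ _ _ _ _ _ V act actL.
have [S sepS S1] := exists_complete_chars subL emb1 embM embC card_neq0 artA absA.
have /andP[S_char _] := sepS.
have phi_core : {in [set z | emb z \in L], char_sum L emb S =1 emb}.
  by move=> w Hw; rewrite (char_sum_core subL) // S1 mulr1.
have retr := retract_alg_retraction subL emb1 embM embC emb_inj sigmaK left_basis
  left_basis_free (char_sum_in_L _ subL S) (char_sumM subL emb1 embM embC card_neq0 sepS)
  (fun z l _ => char_sum_central _ embC S z l) phi_core.
exists (fun a => act (retract left_basis (char_sum L emb S) a)); split.
  by apply: module_over_retraction actL; [case: subL | exact: retr].
by case: retr => _ retract_id _ _ x /retract_id ->.
Qed.
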